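(* Let $G$ be a connected simple cubic graph such that $S_{16}$ admits a $G$-coloring. Then $G$ is isomorphic to $S_{16}$.
   Context: A simple graph has no loops and no parallel edges; a cubic graph is $3$-regular. For a graph $X$ and vertex $x$, $\partial_X(x)$ denotes the set of edges of $X$ incident to $x$. For cubic graphs $G, H$ (loopless, parallel edges allowed), an $H$-coloring of $G$ is a map $f: E(G)\to E(H)$ such that for every vertex $x$ of $G$ there is a vertex $y$ of $H$ with $f(\partial_G(x))=\partial_H(y)$. $S_{16}$ is the simple cubic graph on $16$ vertices defined as follows: it has a central vertex $c$, and for each $i\in\{1,2,3\}$ vertices $v_1^i,\dots,v_5^i$ with edges $v_1^iv_2^i, v_1^iv_3^i, v_1^iv_4^i, v_2^iv_3^i, v_2^iv_4^i, v_3^iv_5^i, v_4^iv_5^i$ and the edge $v_5^ic$ (so $S_{16}$ has $24$ edges, three of which, $v_5^ic$, are bridges). *)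

From mathcomp Require Import all_boot.
Set Implicit Arguments. Unset Strict Implicit. Unset Printing Implicit Defensive.

(* A finite simple graph: vertex type T and a symmetric irreflexive relation e.
   Edges are represented as the 2-element vertex sets {x, y} with e x y. *)
Definition edges (T : finType) (e : rel T) : {set {set T}} :=
  [set E : {set T} | [exists x, exists y, e x y && (E == [set x; y])]].

Definition bd (T : finType) (e : rel T) (x : T) : {set {set T}} :=
  [set E in edges e | x \in E].

Definition simple_graph (T : finType) (e : rel T) : Prop :=
  symmetric e /\ irreflexive e.

Definition cubic (T : finType) (e : rel T) : Prop :=
  forall x : T, #|[set y | e x y]| = 3.

Definition connected_graph (T : finType) (e : rel T) : Prop :=
  forall x y : T, connect e x y.

(* An H-coloring of G: a map f : E(G) -> E(H) (given as a function on vertex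
   sets, constrained only on edges) such that every vertex star maps onto a
   vertex star. *)
Definition H_coloring (T1 T2 : finType) (e1 : rel T1) (e2 : rel T2)
    (f : {set T1} -> {set T2}) : Prop :=
  (forall E, E \in edges e1 -> f E \in edges e2) /\
  (forall x : T1, exists y : T2, f @: bd e1 x = bd e2 y).

(* The graph S_16: vertex None is the centre c, Some (i, k) is v_{k+1}^{i+1}. *)
Definition S16V : finType := option ('I_3 * 'I_5).

Definition gadget_edge (a b : nat) : bool :=
  (a, b) \in [:: (0, 1); (0, 2); (0, 3); (1, 2); (1, 3); (2, 4); (3, 4)].

Definition S16_adj : rel S16V := fun u v =>
  match u, v with
  | Some (i, a), Some (j, b) =>
      (i == j) && (gadget_edge a b || gadget_edge b a)
  | Some (_, a), None => val a == 4
  | None, Some (_, b) => val b == 4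
  | None, None => false
  end.

From mathcomp Require Import all_boot.
Set Implicit Arguments. Unset Strict Implicit. Unset Printing Implicit Defensive.

(* Let g send each vertex x of S16 to the vertex of G whose star is the image
   of the star of x, and let X_i = {v_1^i, ..., v_5^i}.  For an edge uv of G,
   counting pairs (x, E) with x in X_i, E at x and f E = uv shows that the
   number of x in X_i with g x in {u, v} is congruent mod 2 to [f(v_5^i c) = uv]:
   edges inside X_i are counted twice.  So the set A_i of vertices of G with an
   odd number of g-preimages in X_i is cut off by the single edge f(v_5^i c),
   one of the three edges at g c.  In a cubic graph each side of a bridge has at
   least 4 vertices and the far sides of the three bridges at g c are disjoint;
   since |A_i| <= 5, A_i is the far side.  Hence |A_i| >= 4, so the preimage
   counts, which sum to 5, are all at most 1: g is injective, and an injective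
   coloring onto a connected graph is an isomorphism. *)

Section SimpleGraph.
Variables (T : finType) (e : rel T).
Hypotheses (e_sym : symmetric e) (e_irr : irreflexive e).

Lemma edges_pair x y : e x y -> [set x; y] \in edges e.
Proof.
by move=> exy; rewrite inE; apply/existsP; exists x; apply/existsP; exists y; rewrite exy eqxx.
Qed.

Lemma edges_at E x : E \in edges e -> x \in E -> exists2 z, e x z & E = [set x; z].
Proof.
rewrite inE => /existsP [p /existsP [q /andP [epq /eqP ->]]].
by rewrite !inE => /orP [/eqP ->|/eqP ->]; [exists q | exists p; rewrite 1?e_sym 1?setUC].
Qed.

Lemma edges_adj E x y : E \in edges e -> x \in E -> y \in E -> x != y -> e x y.
Proof.
move=> EE xE; have [z exz ->] := edges_at EE xE.
by rewrite !inE => /orP [/eqP ->|/eqP ->]; rewrite ?eqxx.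
Qed.

Lemma bdE x : bd e x = [set [set x; z] | z in [set z | e x z]].
Proof.
apply/setP => E; rewrite inE; apply/andP/imsetP => [[EE xE]|[z]].
  by have [z exz ->] := edges_at EE xE; exists z; rewrite ?inE.
by rewrite inE => exz ->; rewrite edges_pair // !inE eqxx.
Qed.

Lemma bd_pair_inj x : {in [set z | e x z] &, injective (fun z => [set x; z])}.
Proof.
move=> z z'; rewrite !inE => exz exz' /setP/(_ z).
rewrite !inE eqxx orbT => /esym/orP [/eqP xz|/eqP //].
by move: exz; rewrite -xz e_irr.
Qed.

Lemma card_bd x : #|bd e x| = #|[set z | e x z]|.
Proof. by rewrite bdE card_in_imset //; apply: bd_pair_inj. Qed.

Lemma set2_eqF (x z y w : T) : x != y -> x != w -> ([set x; z] == [set y; w]) = false.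
Proof.
move=> xy xw; apply/negbTE/negP => /eqP/setP/(_ x).
by rewrite !inE eqxx (negbTE xy) (negbTE xw).
Qed.

Lemma connected_closed (Z : {set T}) :
  connected_graph e -> (forall x z, x \in Z -> e x z -> z \in Z) ->
  Z != set0 -> Z = [set: T].
Proof.
move=> conn closedZ /set0Pn [x xZ]; apply/setP => y; rewrite inE.
have clZ : closed e (mem Z).
  by move=> a b eab; apply/idP/idP => [/closedZ|/closedZ]; apply; rewrite // e_sym.
by rewrite -(closed_connect clZ (conn x y)).
Qed.

End SimpleGraph.

Lemma sum_eq_mem (T : finType) (A : {pred T}) (a : T) :
  \sum_(x in A) (x == a) = (a \in A).
Proof.
case: (boolP (a \in A)) => aA.
  by rewrite (bigD1 a) //= eqxx big1 // => x /andP [_ /negbTE ->].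
by rewrite big1 // => x xA; apply/eqP; rewrite eqb0; apply: contraNneq aA => <-.
Qed.

Lemma sum_adj_even (T : finType) (e : rel T) (X : {set T}) (w : T -> T -> nat) :
  symmetric e -> irreflexive e -> (forall x z, w x z = w z x) ->
  ~~ odd (\sum_(x in X) \sum_(z in X | e x z) w x z).
Proof.
move=> e_sym e_irr w_sym.
pose c x z := ((x \in X) && (z \in X) && e x z) * w x z.
pose r := @enum_rank T.
have c_sym x z : c x z = c z x.
  by rewrite /c e_sym w_sym; case: (x \in X); case: (z \in X).
have c_split x z : c x z = (r x < r z) * c x z + (r z < r x) * c x z.
  case: (ltngtP (r x) (r z)) => [||/val_inj/enum_rank_inj ->]; rewrite ?mul1n ?mul0n ?addn0 //.
  by rewrite /c e_irr andbF.
have -> : \sum_(x in X) \sum_(z in X | e x z) w x z = \sum_x \sum_z c x z.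
  rewrite [LHS]big_mkcond /=; apply: eq_bigr => x _.
  rewrite [RHS]big_mkcond /=; case: (boolP (x \in X)) => xX; last first.
    by rewrite big1 // => z _; rewrite /c (negbTE xX).
  rewrite big_mkcond /=; apply: eq_bigr => z _.
  by rewrite /c xX; case: (z \in X); case: (e x z); rewrite ?mul1n.
have -> : \sum_x \sum_z c x z =
    \sum_x \sum_z (r x < r z) * c x z + \sum_x \sum_z (r z < r x) * c x z.
  rewrite -big_split; apply: eq_bigr => x _.
  by rewrite -big_split; apply: eq_bigr => z _; apply: c_split.
have -> : \sum_x \sum_z (r z < r x) * c x z = \sum_x \sum_z (r x < r z) * c x z.
  by rewrite exchange_big; apply: eq_bigr => x _; apply: eq_bigr => z _; rewrite c_sym.
by rewrite addnn odd_double.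
Qed.

Section Coloring.
Variables (T1 T2 : finType) (e1 : rel T1) (e2 : rel T2).
Hypotheses (e1_sym : symmetric e1) (e1_irr : irreflexive e1).
Hypotheses (e2_sym : symmetric e2) (e2_irr : irreflexive e2).
Variables (f : {set T1} -> {set T2}) (g : T1 -> T2).
Hypothesis f_bd : forall x, f @: bd e1 x = bd e2 (g x).

Lemma coloring_edge E x : E \in bd e1 x -> f E \in bd e2 (g x).
Proof. by rewrite -f_bd; apply: imset_f. Qed.

Lemma coloring_mem E x : E \in bd e1 x -> g x \in f E.
Proof. by move/coloring_edge; rewrite inE => /andP []. Qed.

Lemma coloring_adj x z : e1 x z -> g x != g z -> e2 (g x) (g z).
Proof.
move=> exz; have xzE : [set x; z] \in bd e1 x by rewrite inE edges_pair // !inE eqxx.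
have zxE : [set x; z] \in bd e1 z by rewrite inE edges_pair // !inE eqxx orbT.
apply: edges_adj (coloring_mem xzE) (coloring_mem zxE) => //.
by move: (coloring_edge xzE); rewrite inE => /andP [].
Qed.

Lemma coloring_nbr x t : e2 (g x) t -> exists2 z, e1 x z & (g z = t \/ g z = g x).
Proof.
move=> ext; have : [set g x; t] \in bd e2 (g x) by rewrite inE edges_pair // !inE eqxx.
rewrite -f_bd => /imsetP [E xE Et]; have := xE.
rewrite inE => /andP [EE /(edges_at e1_sym EE)] [z exz Exz]; exists z => //.
have : g z \in f E by apply: coloring_mem; rewrite Exz inE edges_pair // !inE eqxx orbT.
by rewrite -Et !inE => /orP [] /eqP ->; [right | left].
Qed.

Lemma coloring_inj_iso (x0 : T1) : connected_graph e2 -> injective g ->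
  bijective g /\ forall u v, e2 (g u) (g v) = e1 u v.
Proof.
move=> conn g_inj.
have nbr x t : e2 (g x) t -> exists2 z, e1 x z & g z = t.
  case/coloring_nbr=> z exz [gz | /g_inj zx]; first by exists z.
  by move: exz; rewrite zx e1_irr.
have g_onto : g @: [set: T1] = [set: T2].
  apply: connected_closed => // [_ t /imsetP [x _ ->] /nbr [z _ <-]|].
    exact: imset_f.
  by apply/set0Pn; exists (g x0); apply: imset_f.
split.
  apply: inj_card_bij => //; rewrite -cardsT -g_onto.
  by apply: leq_trans (leq_imset_card _ _) _; rewrite cardsT.
move=> u v; apply/idP/idP => [/nbr [z euz /g_inj <-] // | euv].
apply: coloring_adj; rewrite // (inj_eq g_inj).
by apply: contraTneq euv => ->; rewrite e1_irr.
Qed.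

Section Degree.
Hypothesis deg_le : forall x, #|[set z | e1 x z]| <= #|[set t | e2 (g x) t]|.

Lemma coloring_bd_inj x : {in bd e1 x &, injective f}.
Proof. by apply/imset_injP; rewrite eqn_leq leq_imset_card f_bd !card_bd // deg_le. Qed.

Lemma coloring_count x u v : e2 u v ->
  (g x \in [set u; v]) = \sum_(z | e1 x z) (f [set x; z] == [set u; v]) :> nat.
Proof.
move=> euv; have x_inj := @coloring_bd_inj x.
have -> : \sum_(z | e1 x z) (f [set x; z] == [set u; v]) =
          \sum_(E in bd e1 x) (f E == [set u; v]).
  rewrite bdE // big_imset /=; last exact: bd_pair_inj.
  by apply: eq_bigl => z; rewrite inE.
rewrite -(big_imset (fun E => nat_of_bool (E == [set u; v])) x_inj) /= f_bd sum_eq_mem.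
by rewrite [_ \in bd _ _]inE (edges_pair euv).
Qed.

Lemma coloring_bridge_parity (X : {set T1}) a b u v : e2 u v ->
  (forall x z, x \in X -> z \notin X -> e1 x z = (x == a) && (z == b)) ->
  a \in X -> b \notin X ->
  odd (\sum_(x in X) (g x \in [set u; v])) = (f [set a; b] == [set u; v]).
Proof.
move=> euv bridge aX bX; pose w x z := nat_of_bool (f [set x; z] == [set u; v]).
rewrite (eq_bigr (fun x => \sum_(z | e1 x z) w x z)) => [|x _]; last exact: coloring_count.
have inner_outer x : \sum_(z | e1 x z) w x z =
    \sum_(z in X | e1 x z) w x z + \sum_(z | e1 x z && (z \notin X)) w x z.
  by rewrite (bigID (mem X)) /=; congr (_ + _); apply: eq_bigl => z; rewrite andbC.
rewrite (eq_bigr _ (fun x _ => inner_outer x)) big_split /= oddD.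
rewrite (negbTE (sum_adj_even _ e1_sym e1_irr _)) /=; last by move=> x z; rewrite /w setUC.
have eab : e1 a b by rewrite bridge // !eqxx.
rewrite (bigD1 a) //= [X in _ + X]big1 ?addn0 => [|x /andP [xX xa]]; last first.
  by rewrite big1 // => z /andP [+ zX]; rewrite bridge // (negbTE xa).
rewrite (bigD1 b) ?eab //= big1 ?addn0 ?oddb // => z /andP [/andP [+ zX] zb].
by rewrite bridge // (negbTE zb) andbF.
Qed.
End Degree.
End Coloring.

Section Fibers.
Variables (T1 T2 : finType) (g : T1 -> T2) (X : {set T1}).

Definition fiber_size (y : T2) : nat := \sum_(x in X) (g x == y).

Lemma sum_fiber_size : \sum_y fiber_size y = #|X|.
Proof.
rewrite exchange_big /= -sum1_card; apply: eq_bigr => x _.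
by rewrite (bigD1 (g x)) //= eqxx big1 // => y /negbTE; rewrite eq_sym => ->.
Qed.

Lemma fiber_size_gt0 x : x \in X -> 0 < fiber_size (g x).
Proof. by move=> xX; rewrite /fiber_size (bigD1 x) //= eqxx. Qed.

Lemma fiber_size_imset y : 0 < fiber_size y -> y \in g @: X.
Proof.
case: (pickP [pred x in X | g x == y]) => [x /andP [xX /eqP <-] _ | noX].
  exact: imset_f.
by rewrite /fiber_size big1 // => x xX; have := noX x; rewrite /= xX /= => ->.
Qed.

Lemma fiber_size_le1_inj : (forall y, fiber_size y <= 1) -> {in X &, injective g}.
Proof.
move=> le1 x x' xX x'X gxx'; apply/eqP/negPn/negP => xx'.
have := le1 (g x); rewrite /fiber_size (bigD1 x) //= (bigD1 x') /=; last first.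
  by rewrite x'X eq_sym.
by rewrite eqxx gxx' eqxx.
Qed.

Lemma fiber_size2 u v : u != v ->
  \sum_(x in X) (g x \in [set u; v]) = fiber_size u + fiber_size v.
Proof.
move=> uv; rewrite -big_split; apply: eq_bigr => x _; rewrite !inE.
by case: (g x =P u) => [->|]; rewrite ?(negbTE uv).
Qed.

End Fibers.

Lemma sum_le_card_odd_le1 (T : finType) (n : T -> nat) :
  \sum_y n y <= #|[set y | odd (n y)]|.+1 -> forall y, n y <= 1.
Proof.
move=> sum_le y0; rewrite leqNgt; apply/negP => n_y0.
have : \sum_y (odd (n y) + (y == y0).*2) <= \sum_y n y.
  apply: leq_sum => y _; case: (y =P y0) => [->|_]; last first.
    by rewrite /= addn0; case: (n y) => // m; apply: leq_trans (leq_b1 _) _.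
  by case: (n y0) n_y0 => [|[|[|m]]] //= _; case: (odd m).
have odd_card : \sum_y odd (n y) = #|[set y | odd (n y)]|.
  by rewrite -sum1dep_card [RHS]big_mkcond; apply: eq_bigr => y _; case: odd.
have two : \sum_y (y == y0).*2 = 2.
  by rewrite (bigD1 y0) //= eqxx big1 // => y /negbTE ->.
rewrite big_split /= odd_card two => /leq_trans/(_ sum_le).
by rewrite addn2 ltnn.
Qed.

Section BridgeCut.
Variables (T : finType) (e : rel T).
Hypotheses (e_sym : symmetric e) (e_irr : irreflexive e).

Definition bridge_cut (S : {set T}) (y w : T) :=
  forall u v, e u v -> (u \in S) (+) (v \in S) = ([set u; v] == [set y; w]).

Lemma bridge_cutC S y w : bridge_cut S y w -> bridge_cut (~: S) y w.
Proof. by move=> cutS u v euv; rewrite !inE addbN addNb negbK cutS. Qed.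

Lemma bridge_cut_nbr S y w x z : bridge_cut S y w -> x \in S -> e x z ->
  x != y -> x != w -> z \in S.
Proof.
by move=> cutS xS exz xy xw; move: (cutS x z exz); rewrite xS set2_eqF // => /negbFE.
Qed.

Lemma bridge_cut_end S y w : bridge_cut S y w -> e y w -> y \notin S -> w \in S.
Proof. by move=> cutS eyw yS; move: (cutS y w eyw); rewrite eqxx (negbTE yS). Qed.

Lemma bridge_cut_other_nbr S y w w' : bridge_cut S y w' -> e y w -> w != w' ->
  y \notin S -> w \notin S.
Proof.
move=> cutS ew ww' yS; move: (cutS y w ew); rewrite (negbTE yS) /= => ->.
by rewrite setUC set2_eqF //; apply: contraTneq ew => ->; rewrite e_irr.
Qed.

Lemma bridge_cut_card S y w : cubic e -> bridge_cut S y w -> e y w -> y \notin S ->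
  4 <= #|S|.
Proof.
move=> cub cutS eyw yS; have wS := bridge_cut_end cutS eyw yS.
have : 0 < #|[set z | e w z] :\ y|.
  by move: (cardsD1 y [set z | e w z]); rewrite cub inE e_sym eyw add1n => -[<-].
rewrite card_gt0 => /set0Pn [a]; rewrite !inE => /andP [ay ewa].
have aw : a != w by apply: contraTneq ewa => ->; rewrite e_irr.
have aS : a \in S.
  by move: (cutS w a ewa); rewrite wS setUC set2_eqF // => /negbFE.
have : a |: [set z | e a z] \subset S.
  rewrite subUset sub1set aS; apply/subsetP => z; rewrite inE.
  by move/(bridge_cut_nbr cutS aS); apply.
by move/subset_leq_card; rewrite cardsU1 cub inE e_irr.
Qed.

Lemma bridge_cut_disjoint S1 S2 y w1 w2 : connected_graph e ->
  bridge_cut S1 y w1 -> bridge_cut S2 y w2 -> e y w1 -> e y w2 -> w1 != w2 ->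
  y \notin S1 -> y \notin S2 -> [disjoint S1 & S2].
Proof.
move=> conn cut1 cut2 ew1 ew2 w12 yS1 yS2.
have w1S2 := bridge_cut_other_nbr cut2 ew1 w12 yS2.
have w2S1 : w2 \notin S1 by apply: bridge_cut_other_nbr cut1 ew2 _ yS1; rewrite eq_sym.
rewrite -setI_eq0; apply/negPn/negP => /(connected_closed e_sym conn) S12T.
suff : y \in S1 :&: S2 by rewrite inE (negbTE yS1).
rewrite S12T ?inE // => x z /setIP [xS1 xS2] exz.
have xy : x != y by apply: contraNneq yS1 => <-.
rewrite inE (bridge_cut_nbr cut1 xS1 exz) ?(bridge_cut_nbr cut2 xS2 exz) //.
  by apply: contraNneq w2S1 => <-.
by apply: contraNneq w1S2 => <-.
Qed.

Lemma bridge_cuts_avoid_end (I : finType) (y : T) (w : I -> T) (A : I -> {set T}) :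
  cubic e -> connected_graph e -> 2 < #|I| -> injective w -> (forall i, e y (w i)) ->
  (forall i, bridge_cut (A i) y (w i)) -> (forall i, #|A i| <= 8) ->
  forall i, y \notin A i.
Proof.
move=> cub conn I3 w_inj ew cutA smallA.
pose S i := if y \in A i then ~: A i else A i.
have cutS i : bridge_cut (S i) y (w i).
  by rewrite /S; case: ifP => _; [apply: bridge_cutC |].
have yS i : y \notin S i by rewrite /S; case: ifPn => yA; rewrite ?inE ?yA.
have S_card i := bridge_cut_card cub (cutS i) (ew i) (yS i).
have S_disj i j : i != j -> [disjoint S i & S j].
  move=> ij; apply: (bridge_cut_disjoint conn (cutS i) (cutS j)) => //.
  by rewrite (inj_eq w_inj).
move=> i; apply/negP => yA.
have [j [k [ji ki jk]]] : exists j k, [/\ j != i, k != i & j != k].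
  have /card_gt1P [j [k [ji ki jk]]] : 1 < #|[set~ i]|.
    by rewrite cardsC1 -ltnS prednK // (leq_ltn_trans _ I3).
  by rewrite !inE in ji ki; exists j, k.
have not_Si z : z \notin S i -> z \in A i by rewrite /S yA inE negbK.
have sub : y |: (S j :|: S k) \subset A i.
  apply/subsetP => z; rewrite !inE => /orP [/eqP -> // | /orP [] zS]; apply: not_Si.
    by rewrite (disjointFr (S_disj j i ji) zS).
  by rewrite (disjointFr (S_disj k i ki) zS).
have := leq_trans (subset_leq_card sub) (smallA i).
rewrite cardsU1 cardsU (disjoint_setI0 (S_disj j k jk)) cards0 subn0.
rewrite inE negb_or (negbTE (yS j)) (negbTE (yS k)) add1n ltnS.
by move/(leq_trans (leq_add (S_card j) (S_card k))).
Qed.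
End BridgeCut.

(* Ordinals with the closed bound proof [isT], so that comparisons compute. *)
Local Notation ord3 k := (@Ordinal 3 k isT).
Local Notation ord5 k := (@Ordinal 5 k isT).

Lemma S16_sym : symmetric S16_adj.
Proof. by move=> [[i a]|] [[j b]|] //=; rewrite eq_sym orbC. Qed.

Lemma S16_irr : irreflexive S16_adj.
Proof. by move=> [[i [[|[|[|[|[|a]]]]] Ha]]|] //=; rewrite eqxx. Qed.

Definition S16_nbrs (x : S16V) : seq S16V :=
  match x with
  | None => [:: Some (ord3 0, ord5 4); Some (ord3 1, ord5 4); Some (ord3 2, ord5 4)]
  | Some (i, a) =>
      match val a with
      | 0 => [:: Some (i, ord5 1); Some (i, ord5 2); Some (i, ord5 3)]
      | 1 => [:: Some (i, ord5 0); Some (i, ord5 2); Some (i, ord5 3)]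
      | 2 | 3 => [:: Some (i, ord5 0); Some (i, ord5 1); Some (i, ord5 4)]
      | _ => [:: Some (i, ord5 2); Some (i, ord5 3); None]
      end
  end.

Lemma S16_adj_nbrs x z : S16_adj x z -> z \in S16_nbrs x.
Proof.
case: x z => [[i [a Ha]]|] [[j [b Hb]]|] //=.
- case/andP => /eqP <-.
  move: a Ha b Hb => [|[|[|[|[|a]]]]] Ha [|[|[|[|[|b]]]]] Hb //= _;
  by rewrite !inE !(inj_eq (@Some_inj _)) !xpair_eqE eqxx.
- by move: a Ha => [|[|[|[|[|a]]]]] Ha //= _; rewrite !inE.
- move=> /eqP b4; move: Hb; rewrite b4 => Hb.
  by move: j => [[|[|[|j]]] Hj] //=; rewrite !inE ?eqxx.
Qed.

Lemma S16_degree x : #|[set z | S16_adj x z]| <= 3.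
Proof.
have -> : 3 = size (S16_nbrs x).
  by case: x => [[i [[|[|[|[|[|a]]]]] Ha]]|].
apply: leq_trans (card_size _); apply: subset_leq_card.
by apply/subsetP => z; rewrite inE => /S16_adj_nbrs.
Qed.

Definition gadget (i : 'I_3) : {set S16V} := [set Some (i, k) | k : 'I_5].

Lemma card_gadget i : #|gadget i| = 5.
Proof. by rewrite card_imset ?card_ord // => k k' [->]. Qed.

Lemma mem_gadget i j b : (Some (j, b) \in gadget i) = (j == i).
Proof. by apply/imsetP/eqP => [[k _ [-> _]] | ->] //; exists b. Qed.

Lemma gadget_bridge i x z : x \in gadget i -> z \notin gadget i ->
  S16_adj x z = (x == Some (i, ord5 4)) && (z == None).
Proof.
case/imsetP => a _ ->; case: z => [[j b]|] zX /=.
  have -> : (Some (j, b) == None) = false by [].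
  by rewrite mem_gadget eq_sym in zX; rewrite (negbTE zX) andbF.
by rewrite andbT (inj_eq (@Some_inj _)) xpair_eqE eqxx.
Qed.

Lemma hub_edge_bd i : [set Some (i, ord5 4); None] \in bd S16_adj None.
Proof. by rewrite inE edges_pair // !inE eqxx orbT. Qed.

Lemma hub_edge_inj : injective (fun i : 'I_3 => [set Some (i, ord5 4); None]).
Proof.
move=> i j /setP/(_ (Some (i, ord5 4))); rewrite !inE eqxx /= => /esym.
by case/orP => /eqP // -[->].
Qed.

Section S16Coloring.
Variables (T : finType) (e : rel T) (f : {set S16V} -> {set T}) (g : S16V -> T).
Hypotheses (e_sym : symmetric e) (e_irr : irreflexive e).
Hypotheses (e_cubic : cubic e) (e_conn : connected_graph e).
Hypothesis f_bd : forall x, f @: bd S16_adj x = bd e (g x).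

Let deg_le x : #|[set z | S16_adj x z]| <= #|[set t | e (g x) t]|.
Proof. by rewrite e_cubic S16_degree. Qed.

Definition odd_fibers i := [set y | odd (fiber_size g (gadget i) y)].

Lemma hub_bridges : exists2 w : 'I_3 -> T, injective w &
  forall i, e (g None) (w i) /\ bridge_cut e (odd_fibers i) (g None) (w i).
Proof.
have hub_nbr i :
    exists w, e (g None) w /\ f [set Some (i, ord5 4); None] = [set g None; w].
  have := coloring_edge f_bd (hub_edge_bd i).
  rewrite inE => /andP [E_edge /(edges_at e_sym E_edge)] [w ew ->].
  by exists w.
have [w w_spec] := fin_all_exists hub_nbr; exists w => [i j wij | i].
  apply: hub_edge_inj; apply: (coloring_bd_inj S16_sym S16_irr e_sym e_irr f_bd deg_le
    (hub_edge_bd i) (hub_edge_bd j)).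
  by rewrite (proj2 (w_spec i)) (proj2 (w_spec j)) wij.
have [ew f_hub] := w_spec i; split=> // u v euv.
have uv : u != v by apply: contraTneq euv => ->; rewrite e_irr.
rewrite !inE -oddD -fiber_size2 //.
rewrite (coloring_bridge_parity S16_sym S16_irr e_sym e_irr f_bd deg_le euv
  (@gadget_bridge i)).
- by rewrite f_hub eq_sym.
- by rewrite mem_gadget.
by apply/imsetP => -[].
Qed.

Lemma S16_coloring_inj : injective g.
Proof.
have [w w_inj w_spec] := hub_bridges.
have ew i := (w_spec i).1; have cutA i := (w_spec i).2.
have small i : #|odd_fibers i| <= 5.
  rewrite -(card_gadget i); apply: leq_trans (leq_imset_card g _).
  by apply/subset_leq_card/subsetP => y; rewrite inE => /odd_gt0/fiber_size_imset.
have hub_even : forall i, g None \notin odd_fibers i.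
  apply: (bridge_cuts_avoid_end e_sym e_irr e_cubic e_conn _ w_inj ew cutA).
    by rewrite card_ord.
  by move=> i; apply: leq_trans (small i) _.
have fib_le1 i : forall y, fiber_size g (gadget i) y <= 1.
  apply: sum_le_card_odd_le1; rewrite sum_fiber_size card_gadget.
  exact: (bridge_cut_card e_sym e_irr e_cubic (cutA i) (ew i) (hub_even i)).
have g_odd i x : x \in gadget i -> g x \in odd_fibers i.
  move=> xX; rewrite inE; have := fiber_size_gt0 g xX; have := fib_le1 i (g x).
  by case: (fiber_size _ _ _) => [|[|m]].
have g_mem i a : g (Some (i, a)) \in odd_fibers i by apply: g_odd; rewrite mem_gadget.
have disj i j : i != j -> [disjoint odd_fibers i & odd_fibers j].
  move=> ij; apply: (bridge_cut_disjoint e_sym e_irr e_conn (cutA i) (cutA j)) => //.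
  by rewrite (inj_eq w_inj).
move=> [[i a]|] [[j b]|] // gab.
- have [ij | ij] := eqVneq i j.
    by move: gab; rewrite -ij => /(fiber_size_le1_inj (fib_le1 i)) ->;
      rewrite ?mem_gadget.
  by have := disjointFr (disj i j ij) (g_mem i a); rewrite gab g_mem.
- by have := g_mem i a; rewrite gab (negbTE (hub_even i)).
by have := g_mem j b; rewrite -gab (negbTE (hub_even j)).
Qed.
End S16Coloring.

Theorem theorem3 (T : finType) (e : rel T)
  (Hsimple : simple_graph e) (Hcubic : cubic e) (Hconn : connected_graph e)
  (Hcol : exists f : {set S16V} -> {set T}, H_coloring S16_adj e f) :
  exists phi : S16V -> T, bijective phi /\
    (forall u v : S16V, e (phi u) (phi v) = S16_adj u v).
Proof.
have [e_sym e_irr] := Hsimple.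
have [f [_ /fin_all_exists [g f_bd]]] := Hcol.
exists g; apply: (coloring_inj_iso S16_sym S16_irr e_sym f_bd None Hconn).
exact: (S16_coloring_inj e_sym e_irr Hcubic Hconn f_bd).
Qed.
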